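(* For each $n$ let $0<p_n,q_n\le 1$, let $M=\lceil n^2/p_n\rceil$, and let $\alpha$ be any initial configuration of $n$ cards. Play $M$ moves of $p_n$-random $q_n$-proportion Bulgarian solitaire $\mathscr{B}(n,p_n,q_n)$ starting from $\alpha$. Then, with probability tending to $1$ as $n\to\infty$, every pile present in $\alpha$ has been completely consumed (contains no cards) after these $M$ moves.
   Context: $\mathscr{B}(n,p,q)$ ($0<p,q\le 1$) is played on $n$ identical cards distributed in piles. In one move, from each pile of size $h$ the top $\lceil qh\rceil$ cards are candidates; each candidate card is picked with probability $p$, independently of all other candidates; the picked cards are removed and together form one new pile. Piles are tracked individually (ordered by time of creation), so that one can follow what happens to each pile of the initial configuration. *)

From HB Require Import structures.
From mathcomp Require Import all_boot all_order all_algebra.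
From mathcomp Require Import all_classical all_reals all_analysis.
Set Implicit Arguments. Unset Strict Implicit. Unset Printing Implicit Defensive.
Import Order.TTheory GRing.Theory Num.Theory.
Import numFieldNormedType.Exports.
Local Open Scope ring_scope.

(* A configuration is the sequence of pile sizes, ordered by time of creation.
   Piles are never deleted (an emptied pile stays as a 0 entry), so that the
   piles of the initial configuration are always the first [size alpha]
   entries.  Since cards are identical, a move is determined by the number
   k_i of cards picked from each pile i. *)

Definition ncand {R : realType} (q : R) (h : nat) : nat :=
  `|Num.ceil (q * h%:R)|%N.

Fixpoint pick_vecs (cs : seq nat) : seq (seq nat) :=
  match cs with
  | [::] => [:: [::]]
  | c :: cs' => [seq k :: v | k <- iota 0 c.+1, v <- pick_vecs cs']
  end.

Definition binom_pmf {R : realType} (p : R) (c k : nat) : R :=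
  'C(c, k)%:R * p ^+ k * (1 - p) ^+ (c - k).

Definition move_weight {R : realType} (p q : R) (s ks : seq nat) : R :=
  \prod_(i < size s) binom_pmf p (ncand q (nth 0%N s i)) (nth 0%N ks i).

Definition move_result (s ks : seq nat) : seq nat :=
  rcons [seq (x.1 - x.2)%N | x <- zip s ks] (sumn ks).

Fixpoint prob_first_empty {R : realType} (p q : R) (m L : nat) (s : seq nat) : R :=
  match m with
  | 0%N => if all (fun h => h == 0%N) (take L s) then 1 else 0
  | m'.+1 => \sum_(ks <- pick_vecs [seq ncand q h | h <- s])
               move_weight p q s ks * prob_first_empty p q m' L (move_result s ks)
  end.

Definition is_config (n : nat) (alpha : seq nat) : bool :=
  all (fun h => 0 < h)%N alpha && (sumn alpha == n).

From HB Require Import structures.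
From mathcomp Require Import all_boot all_order all_algebra.
From mathcomp Require Import all_classical all_reals all_analysis.
From mathcomp Require Import ring lra.
Import Order.TTheory GRing.Theory Num.Theory.
Import numFieldNormedType.Exports.
Local Open Scope classical_set_scope.
Local Open Scope ring_scope.

(* Give a pile of size h > 0 the potential 2^h (1 - p/2)^m when m moves remain,
   and an empty pile the potential 0.  A nonempty pile has at least one
   candidate card, so with probability at least p it loses a card, which at
   least halves 2^h; hence the expected potential after one move is at most the
   potential before it.  As the potential of a nonempty pile with no move left
   is at least 1, the probability that some initial pile survives m moves is at
   most sum_i 2^(alpha_i) (1 - p/2)^m <= n 2^n exp(-p m / 2), which for
   m = ceil(n^2/p) is at most n exp(n - n^2/2). *)

Lemma pick_vecs_cons c cs :
  pick_vecs (c :: cs) = [seq k :: v | k <- iota 0 c.+1, v <- pick_vecs cs].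
Proof. by []. Qed.

Lemma size_pick_vecs cs ks : ks \in pick_vecs cs -> size ks = size cs.
Proof.
elim: cs ks => [|c cs IH] ks; first by rewrite inE => /eqP ->.
rewrite pick_vecs_cons => /allpairsPdep[k [v [_ /IH size_v ->]]].
by rewrite /= size_v.
Qed.

Section PickVecsSums.
Context {R : comPzSemiRingType}.

Lemma sum_pick_vecs_prod cs (F : nat -> nat -> R) :
  \sum_(ks <- pick_vecs cs) \prod_(i < size cs) F i (nth 0%N ks i)
  = \prod_(i < size cs) \sum_(k < (nth 0%N cs i).+1) F i k.
Proof.
elim: cs F => [|c cs IH] F; first by rewrite /= big_seq1 !big_ord0.
have iota_c : iota 0 c.+1 = index_iota 0 c.+1 by rewrite /index_iota subn0.
rewrite pick_vecs_cons big_allpairs_dep iota_c big_mkord [RHS]big_ord_recl /=.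
have /= <- := IH (fun i => F i.+1); rewrite mulr_suml.
apply: eq_bigr => k _; rewrite mulr_sumr; apply: eq_bigr => v _.
by rewrite big_ord_recl.
Qed.

Lemma sum_pick_vecs_marginal cs (b : nat -> nat -> R) i0 (f : nat -> R) :
  (i0 < size cs)%N ->
  (forall i, (i < size cs)%N -> \sum_(k < (nth 0%N cs i).+1) b i k = 1) ->
  \sum_(ks <- pick_vecs cs) (\prod_(i < size cs) b i (nth 0%N ks i)) * f (nth 0%N ks i0)
  = \sum_(k < (nth 0%N cs i0).+1) b i0 k * f k.
Proof.
move=> lt_i0 b_sum1; pose j0 := Ordinal lt_i0.
have neq_j0 (i : 'I_(size cs)) : i != j0 -> ((i : nat) == i0) = false.
  by move=> ne_ij0; apply/eqP => eq_ii0; case/eqP: ne_ij0; apply: val_inj.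
pose F i k := b i k * (if i == i0 then f k else 1).
transitivity (\sum_(ks <- pick_vecs cs) \prod_(i < size cs) F i (nth 0%N ks i)).
  apply: eq_bigr => ks _; rewrite big_split /= [X in _ = _ * X](bigD1 j0) //= eqxx.
  by rewrite [X in _ * (_ * X)]big1 ?mulr1 // => i /neq_j0 ->.
rewrite sum_pick_vecs_prod (bigD1 j0) //= [X in _ * X]big1 ?mulr1.
  by apply: eq_bigr => k _; rewrite /F eqxx.
by move=> i ne_ij0; under eq_bigr do rewrite /F neq_j0 // mulr1; apply: b_sum1.
Qed.

End PickVecsSums.

Lemma size_move_result s ks :
  size ks = size s -> size (move_result s ks) = (size s).+1.
Proof. by move=> size_ks; rewrite size_rcons size_map size_zip size_ks minnn. Qed.

Lemma nth_move_result s ks i : size ks = size s -> (i < size s)%N ->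
  nth 0%N (move_result s ks) i = (nth 0%N s i - nth 0%N ks i)%N.
Proof.
move=> size_ks lt_i.
rewrite nth_rcons size_map size_zip size_ks minnn lt_i.
by rewrite (nth_map (0%N, 0%N)) ?size_zip ?size_ks ?minnn // nth_zip.
Qed.

Lemma ncand_gt0 {R : realType} (q : R) h : 0 < q -> (0 < h)%N -> (0 < ncand q h)%N.
Proof.
by move=> q_gt0 h_gt0; rewrite /ncand absz_gt0 ceil_neq0 mulr_gt0 ?orbT ?ltr0n.
Qed.

Lemma size_le_sumn s : all (fun h => 0 < h)%N s -> (size s <= sumn s)%N.
Proof.
by elim: s => //= h s IH /andP[h_gt0 /IH]; rewrite -add1n; apply: leq_add.
Qed.

Lemma nth_le_sumn s i : (nth 0%N s i <= sumn s)%N.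
Proof.
elim: s i => [|h s IH] [|i] //=; first exact: leq_addr.
exact: leq_trans (IH i) (leq_addl _ _).
Qed.

Section MoveProbabilities.
Context {R : realType}.
Variables (p q : R).
Hypothesis p01 : 0 <= p <= 1.

Lemma binom_pmf_ge0 c k : 0 <= binom_pmf p c k.
Proof.
case/andP: p01 => p_ge0 p_le1.
by rewrite /binom_pmf !mulr_ge0 ?exprn_ge0 ?subr_ge0.
Qed.

Lemma sum_binom_pmf c : \sum_(k < c.+1) binom_pmf p c k = 1.
Proof.
transitivity ((1 - p + p) ^+ c); last by rewrite subrK expr1n.
rewrite exprDn; apply: eq_bigr => k _.
by rewrite /binom_pmf -[RHS]mulr_natl -mulrA [p ^+ k * _]mulrC.
Qed.

Lemma binom_pmf0 c : binom_pmf p c 0 = (1 - p) ^+ c.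
Proof. by rewrite /binom_pmf bin0 expr0 mulr1 mul1r subn0. Qed.

Lemma move_weight_ge0 s ks : 0 <= move_weight p q s ks.
Proof. by apply: prodr_ge0 => i _; apply: binom_pmf_ge0. Qed.

Lemma sum_move_weight s :
  \sum_(ks <- pick_vecs [seq ncand q h | h <- s]) move_weight p q s ks = 1.
Proof.
have := sum_pick_vecs_prod [seq ncand q h | h <- s]
  (fun i k => binom_pmf p (ncand q (nth 0%N s i)) k).
rewrite size_map /move_weight => ->.
by apply: big1 => i _; rewrite (nth_map 0%N) // sum_binom_pmf.
Qed.

Lemma sum_move_weight_marginal s i0 (f : nat -> R) : (i0 < size s)%N ->
  \sum_(ks <- pick_vecs [seq ncand q h | h <- s])
     move_weight p q s ks * f (nth 0%N ks i0)
  = \sum_(k < (ncand q (nth 0%N s i0)).+1)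
     binom_pmf p (ncand q (nth 0%N s i0)) k * f k.
Proof.
move=> lt_i0; have := sum_pick_vecs_marginal [seq ncand q h | h <- s]
  (fun i k => binom_pmf p (ncand q (nth 0%N s i)) k) i0 f.
rewrite size_map (nth_map 0%N) // => -> //.
by move=> i lt_i; rewrite (nth_map 0%N) // sum_binom_pmf.
Qed.

Lemma prob_first_empty_le1 m L s : prob_first_empty p q m L s <= 1.
Proof.
elim: m s => [|m IH] s /=; first by case: ifP.
rewrite -(sum_move_weight s); apply: ler_sum => ks _.
by rewrite ler_piMr ?move_weight_ge0.
Qed.

End MoveProbabilities.

Section Potential.
Context {R : realType}.
Variable p : R.
Hypothesis p01 : 0 <= p <= 1.

Definition potential (m h : nat) : R :=
  if h == 0%N then 0 else 2 ^+ h * (1 - p / 2) ^+ m.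

Lemma decay_ge0 m : 0 <= (1 - p / 2) ^+ m.
Proof. by case/andP: p01 => p_ge0 p_le1; rewrite exprn_ge0 //; lra. Qed.

Lemma potential_ge0 m h : 0 <= potential m h.
Proof.
by rewrite /potential; case: eqP => // _; rewrite mulr_ge0 ?decay_ge0 ?exprn_ge0.
Qed.

Lemma potential_le m h n :
  (h <= n)%N -> potential m h <= 2 ^+ n * (1 - p / 2) ^+ m.
Proof.
move=> le_hn; rewrite /potential; case: eqP => _.
  by rewrite mulr_ge0 ?decay_ge0 ?exprn_ge0.
by rewrite ler_wpM2r ?decay_ge0 // ler_eXn2l ?ltr1n.
Qed.

Lemma potential_step m c h : ((0 < h)%N -> (0 < c)%N) ->
  \sum_(k < c.+1) binom_pmf p c k * potential m (h - k) <= potential m.+1 h.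
Proof.
case: h => [_|h /(_ isT) c_gt0].
  by rewrite big1 // => k _; rewrite sub0n /potential mulr0.
case/andP: p01 => p_ge0 p_le1.
set X := 2 ^+ h * (1 - p / 2) ^+ m.
have X_ge0 : 0 <= X by rewrite mulr_ge0 ?decay_ge0 ?exprn_ge0.
set Y := (1 - p) ^+ c.
have Y_le : Y <= 1 - p.
  by rewrite /Y -(prednK c_gt0) exprS ler_piMr ?exprn_ile1 //; lra.
have Y_ge0 : 0 <= Y by rewrite /Y exprn_ge0 //; lra.
have rest_le : \sum_(k < c) binom_pmf p c (lift ord0 k)
                   * potential m (h.+1 - lift ord0 k) <= (1 - Y) * X.
  have := sum_binom_pmf p c; rewrite big_ord_recl binom_pmf0 -/Y => sum1.
  rewrite -{1}sum1 addrC addKr mulr_suml.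
  apply: ler_sum => k _; rewrite ler_wpM2l ?binom_pmf_ge0 //.
  by rewrite lift0 subSS potential_le ?leq_subr.
rewrite big_ord_recl binom_pmf0 -/Y subn0.
have -> : potential m h.+1 = 2 * X by rewrite /potential /X exprS mulrA.
have -> : potential m.+1 h.+1 = (2 - p) * X.
  by rewrite /potential /X !exprS; field.
nra.
Qed.

End Potential.

Section FirstEmptyBound.
Context {R : realType} {p q : R}.
Hypotheses (p01 : 0 <= p <= 1) (q_gt0 : 0 < q).

Lemma prob_first_empty0_ge L s :
  1 - \sum_(i < L) potential p 0 (nth 0%N s i) <= prob_first_empty p q 0 L s.
Proof.
rewrite /=; case: ifP => [_|/negbT].
  by rewrite lerBlDr lerDl sumr_ge0 // => i _; apply: potential_ge0.
rewrite -has_predC => /(has_nthP 0%N)[i]; rewrite size_take_min leq_min.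
case/andP=> lt_iL _; rewrite nth_take //= => nz_si.
rewrite subr_le0 (bigD1 (Ordinal lt_iL)) //= -[1]addr0 lerD //.
  by rewrite /potential (negbTE nz_si) expr0 mulr1 exprn_ege1 ?ler1n.
by rewrite sumr_ge0 // => j _; apply: potential_ge0.
Qed.

Lemma prob_first_empty_ge m L s : (L <= size s)%N ->
  1 - \sum_(i < L) potential p m (nth 0%N s i) <= prob_first_empty p q m L s.
Proof.
elim: m s => [|m IH] s le_Ls; first exact: prob_first_empty0_ge.
pose Ks := pick_vecs [seq ncand q h | h <- s].
have step_ge ks : ks \in Ks ->
    1 - \sum_(i < L) potential p m (nth 0%N s i - nth 0%N ks i)
    <= prob_first_empty p q m L (move_result s ks).
  move=> /size_pick_vecs; rewrite size_map => size_ks.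
  have lt_is (i : 'I_L) : (i < size s)%N by apply: leq_trans le_Ls.
  under eq_bigr => i _ do rewrite -nth_move_result //.
  by apply: IH; rewrite size_move_result // leqW.
apply: le_trans (_ : \sum_(ks <- Ks) move_weight p q s ks *
    (1 - \sum_(i < L) potential p m (nth 0%N s i - nth 0%N ks i)) <= _); last first.
  rewrite /= big_seq [X in _ <= X]big_seq; apply: ler_sum => ks ks_in.
  by rewrite ler_wpM2l ?move_weight_ge0 ?step_ge.
under [X in _ <= X]eq_bigr do rewrite mulrBr mulr1 mulr_sumr.
rewrite sumrB sum_move_weight exchange_big lerD2l lerN2 /=; apply: ler_sum => i _.
rewrite (sum_move_weight_marginal p q s i (fun k => potential p m (nth 0%N s i - k)));
  last exact: leq_trans le_Ls.
by apply: potential_step => // /ncand_gt0; apply.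
Qed.

End FirstEmptyBound.

Lemma sum_potential_config {R : realType} {p : R} {n m s} :
  0 <= p <= 1 -> is_config n s ->
  \sum_(i < size s) potential p m (nth 0%N s i)
  <= n%:R * (2 ^+ n * (1 - p / 2) ^+ m).
Proof.
move=> p01 /andP[s_gt0 /eqP sum_s].
apply: le_trans (_ : \sum_(i < size s) 2 ^+ n * (1 - p / 2) ^+ m <= _).
  by apply: ler_sum => i _; rewrite potential_le // -sum_s nth_le_sumn.
rewrite sumr_const card_ord -[X in X <= _]mulr_natl.
rewrite ler_wpM2r ?mulr_ge0 ?decay_ge0 ?exprn_ge0 //.
by rewrite ler_nat -sum_s size_le_sumn.
Qed.

Lemma exprn_le_expR {R : realType} (x : R) m :
  0 <= 1 + x -> (1 + x) ^+ m <= expR (x * m%:R).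
Proof.
by move=> x_ge; rewrite expRM_natr lerXn2r ?nnegrE ?expR_ge0 ?expR_ge1Dx.
Qed.

Lemma mul_expRN_le {R : realType} (x : R) :
  0 <= x -> x * expR (- x) <= 4 / (x + 1).
Proof.
move=> x_ge0; have exp_ge : 1 + x ^+ 2 / 2 <= expR x by apply: expR_ge1Dxn.
have exp_gt0 := expR_gt0 x; have x1_gt0 : 0 < x + 1 by lra.
rewrite expRN ler_pdivlMr // mulrAC ler_pdivrMr //.
nra.
Qed.

Lemma le_mul_absz_ceil_div {R : realType} (x p : R) : 0 <= x -> 0 < p ->
  x <= p * `|Num.ceil (x / p)|%N%:R.
Proof.
move=> x_ge0 p_gt0; rewrite -ler_pdivrMl // [_ * x]mulrC natr_absz.
rewrite ger0_norm ?ceil_ge //.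
by rewrite ceil_ge0 (lt_le_trans _ (divr_ge0 x_ge0 (ltW p_gt0))) ?ltrN10.
Qed.

Lemma config_tail_le {R : realType} {p : R} {n : nat} :
  0 < p <= 1 -> (4 <= n)%N ->
  n%:R * (2 ^+ n * (1 - p / 2) ^+ `|Num.ceil ((n ^ 2)%:R / p)|%N) <= 4 / n.+1%:R.
Proof.
move=> /andP[p_gt0 p_le1] n_ge4.
set M := `|Num.ceil _|%N; set x : R := n%:R.
have x_ge4 : 4 <= x by rewrite (ler_nat _ 4).
have pM_ge : x ^+ 2 <= p * M%:R.
  by rewrite /x -natrX le_mul_absz_ceil_div ?ler0n.
have decay_le : (1 - p / 2) ^+ M <= expR (- (p / 2) * M%:R).
  by apply: exprn_le_expR; lra.
have two_le : 2 ^+ n <= expR x by rewrite -[x]mul1r exprn_le_expR.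
have x_ge0 : 0 <= x by rewrite ler0n.
rewrite -(natr1 n); apply: le_trans _ (mul_expRN_le _ x_ge0).
rewrite ler_wpM2l //.
apply: le_trans (ler_pM _ _ two_le decay_le) _; rewrite ?exprn_ge0 //; first lra.
by rewrite -expRD ler_expR; nra.
Qed.

Theorem lemma4 (R : realType) (p q : nat -> R) (alpha : nat -> seq nat)
  (hp : forall n, 0 < p n <= 1) (hq : forall n, 0 < q n <= 1)
  (halpha : forall n, is_config n (alpha n)) :
  (fun n => prob_first_empty (p n) (q n)
              `|Num.ceil ((n ^ 2)%:R / p n)|%N (size (alpha n)) (alpha n))
    @ \oo --> (1 : R).
Proof.
have lower_cvg : (fun n => 1 - 4 * harmonic n) @ \oo --> (1 : R).
  have := cvgB (cvg_cst (1 : R)) (cvgM (cvg_cst (4 : R)) (@cvg_harmonic R)).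
  by rewrite mulr0 subr0; apply.
apply: (squeeze_cvgr _ lower_cvg (cvg_cst (1 : R))).
apply: filterS (nbhs_infty_ge 4) => n n_ge4 /=.
have p01 : 0 <= p n <= 1 by case/andP: (hp n) => /ltW -> ->.
have q_gt0 : 0 < q n by case/andP: (hq n).
rewrite prob_first_empty_le1 // andbT.
apply: le_trans _ (prob_first_empty_ge p01 q_gt0 _ _ _ (leqnn _)).
rewrite lerD2l lerN2; apply: le_trans (sum_potential_config p01 (halpha n)) _.
exact: config_tail_le (hp n) n_ge4.
Qed.
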